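(* Let $G$ be a finite connected graph with at least one edge and $\Delta$ a decision tree for $G$. Then the set of subsets of $E(G)$ is the disjoint union of subgraph intervals indexed by the spanning trees: $$2^{E(G)}=\bigsqcup_{T\text{ spanning tree of }G}\bigl[T\setminus\mathcal J(T),\ T\cup\mathcal E(T)\bigr],$$ where $\mathcal J(T)$ and $\mathcal E(T)$ are the sets of $\Delta$-active edges of $T$ belonging to $T$ and not belonging to $T$ respectively.
   Context: Graphs may have loops and multiple edges; spanning subgraphs are identified with edge subsets, and for $A\subseteq B\subseteq E(G)$ the interval $[A,B]$ is $\{S:A\subseteq S\subseteq B\}$. An isthmus is an edge whose deletion increases the number of components; an edge is standard if neither a loop nor an isthmus. Let $m=|E(G)|$. A decision tree is a perfect binary tree of depth $m-1$ whose nodes are labelled by edges of $G$ so that along every root-to-leaf path the labels form a permutation of $E(G)$. Given $S\subseteq E(G)$, run: $H:=G$, $n:=$ root; for $k=1,\dots,m$: let $e$ be the label of $n$; if $e$ is a loop of $H$: type L, delete $e$, go to left child; if $e$ is an isthmus of $H$: type I, contract $e$, go to right child; if $e$ is standard and $e\notin S$: type $S_e$, delete, go left; if standard and $e\in S$: type $S_i$, contract, go right. An edge is $\Delta$-active for $S$ if its type is L or I. *)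

(* Multigraphs (loops and multiple edges allowed) on a fixed
   vertex type V and edge type E; a graph is a vertex subset, an edge subset
   and an endpoint map. *)
From mathcomp Require Import all_boot.

Set Implicit Arguments.
Unset Strict Implicit.
Unset Printing Implicit Defensive.

Section Graphs.
Variables (V E : finType).

Record mgraph := MG { gv : {set V}; ge : {set E}; gends : E -> V * V }.

Definition joins (H : mgraph) (e : E) (x y : V) : bool :=
  (gends H e == (x, y)) || (gends H e == (y, x)).

Definition adj (H : mgraph) : rel V :=
  fun x y => [exists f in ge H, joins H f x y].

Definition ncomp (H : mgraph) : nat :=
  #|[set [set y in gv H | connect (adj H) x y] | x in gv H]|.

Definition delete (H : mgraph) (e : E) : mgraph :=
  MG (gv H) (ge H :\ e) (gends H).

Definition contract (H : mgraph) (e : E) : mgraph :=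
  let u := (gends H e).1 in let v := (gends H e).2 in
  if u == v then delete H e else
  MG (gv H :\ v) (ge H :\ e)
     (fun f => let w := gends H f in
               (if w.1 == v then u else w.1, if w.2 == v then u else w.2)).

Definition is_loop (H : mgraph) (e : E) : bool :=
  (e \in ge H) && ((gends H e).1 == (gends H e).2).

Definition is_isthmus (H : mgraph) (e : E) : bool :=
  (e \in ge H) && (ncomp H < ncomp (delete H e)).

Inductive etype := TL | TI | TSe | TSi.

Definition goes_right (t : etype) : bool :=
  match t with TI | TSi => true | _ => false end.

Definition is_active_type (t : etype) : bool :=
  match t with TL | TI => true | _ => false end.

Definition classify (H : mgraph) (S : {set E}) (e : E) : etype :=
  if is_loop H e then TL
  else if is_isthmus H e then TI
  else if e \notin S then TSe else TSi.

(* A decision tree: a labelling of the nodes of the perfect binary tree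
   (nodes = bit sequences, false = left child, true = right child). *)
Definition is_decision_tree (lab : seq bool -> E) : Prop :=
  forall p : seq bool, size p = #|E|.-1 ->
    perm_eq [seq lab (take i p) | i <- iota 0 #|E|] (enum E).

Fixpoint run (lab : seq bool -> E) (S : {set E}) (k : nat) (H : mgraph)
    (n : seq bool) : seq (E * etype) :=
  match k with
  | 0 => [::]
  | k'.+1 =>
      let e := lab n in
      let t := classify H S e in
      (e, t) :: (if goes_right t
                 then run lab S k' (contract H e) (rcons n true)
                 else run lab S k' (delete H e) (rcons n false))
  end.

Definition active (G : mgraph) (lab : seq bool -> E) (S : {set E}) : {set E} :=
  [set e | has (fun et => (et.1 == e) && is_active_type et.2)
                (run lab S #|E| G [::])].

Definition Jset G lab (T : {set E}) : {set E} := active G lab T :&: T.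
Definition Eset G lab (T : {set E}) : {set E} := active G lab T :\: T.

Definition connected_graph (H : mgraph) : Prop :=
  forall x y : V, connect (adj H) x y.

(* a cycle in the edge set T: edges es = e_1..e_k (distinct, k >= 1),
   vertices v0, vs = v_1..v_k with v_k = v0, v_1..v_k distinct,
   e_i joining v_{i-1} and v_i. *)
Definition is_cycle (ends : E -> V * V) (T : {set E}) (v0 : V)
    (es : seq E) (vs : seq V) : bool :=
  [&& es != [::], size vs == size es, uniq es, all (fun e => e \in T) es,
      last v0 vs == v0, uniq vs &
      all (fun t => joins (MG setT T ends) t.1 t.2.1 t.2.2)
          (zip es (zip (v0 :: vs) vs))].

Definition acyclic (ends : E -> V * V) (T : {set E}) : Prop :=
  forall v0 es vs, ~~ is_cycle ends T v0 es vs.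

Definition spanning_tree (G : mgraph) (T : {set E}) : Prop :=
  T \subset ge G /\ connected_graph (MG (gv G) T (gends G)) /\
  acyclic (gends G) T.

End Graphs.

(* Running the algorithm on S contracts exactly the edges of a spanning tree:
   a contracted edge is never a loop, a deleted edge is a loop or a non-isthmus,
   so every intermediate graph stays connected, and a connected graph without
   edges is spanned by the empty set.  Conversely, on a spanning tree T the run
   contracts exactly T, as loops lie outside T and isthmi inside it.  The run
   consults its argument only on standard edges, and S lies in the interval of
   T exactly when S and T agree on the standard edges of the run on T; then the
   runs on S and on T coincide, which gives both existence and uniqueness. *)

From HB Require Import structures.
From mathcomp Require Import all_boot.

Set Implicit Arguments.
Unset Strict Implicit.
Unset Printing Implicit Defensive.

Lemma connect_homo (T T' : finType) (g : T -> T') (e : rel T) (e' : rel T') :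
  (forall x y, e x y -> connect e' (g x) (g y)) ->
  forall x y, connect e x y -> connect e' (g x) (g y).
Proof.
move=> h x y /connectP[p]; elim: p x => [|z p IH] x /=; first by move=> _ ->.
by case/andP=> exz pz ly; apply: connect_trans (h _ _ exz) (IH _ pz ly).
Qed.

Section EdgeConnectivity.
Variables (V E : finType) (ends : E -> V * V).
Implicit Types (A B : {set E}) (x y : V).

Definition eadj A : rel V :=
  fun x y => [exists f in A, (ends f == (x, y)) || (ends f == (y, x))].

Lemma eadj_sym A : symmetric (eadj A).
Proof.
by move=> x y; apply/existsP/existsP => -[f /andP[fA j]]; exists f; rewrite fA orbC.
Qed.

Lemma eadj_csym A : connect_sym (eadj A).
Proof. exact/sym_connect_sym/eadj_sym. Qed.

Lemma eadj_ends A f : f \in A -> eadj A (ends f).1 (ends f).2.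
Proof. by move=> fA; apply/existsP; exists f; rewrite fA -surjective_pairing eqxx. Qed.

Lemma eadj_sub A B : A \subset B -> subrel (eadj A) (eadj B).
Proof.
move=> sAB x y /existsP[f /andP[fA j]].
by apply/existsP; exists f; rewrite (subsetP sAB _ fA).
Qed.

Lemma connect_eadj_sub A B : A \subset B -> subrel (connect (eadj A)) (connect (eadj B)).
Proof. by move=> sAB; apply: connect_sub => x y /(eadj_sub sAB)/connect1. Qed.

Lemma eadj_setD1_incident A g u x y :
  ((ends g).1 == u) || ((ends g).2 == u) -> x != u -> y != u ->
  eadj A x y -> eadj (A :\ g) x y.
Proof.
move=> gu xu yu /existsP[f /andP[fA j]]; apply/existsP; exists f.
rewrite !inE fA j !andbT; apply: contraTneq gu => <-.
by case/orP: j => /eqP -> /=; rewrite (negbTE xu) (negbTE yu).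
Qed.

Definition connected_on (P : {set V}) A :=
  forall x y, x \in P -> y \in P -> connect (eadj A) x y.

Definition forest A :=
  forall f, f \in A -> ~~ connect (eadj (A :\ f)) (ends f).1 (ends f).2.

End EdgeConnectivity.

Section GraphConnectivity.
Variables (V E : finType).
Implicit Types (H : mgraph V E) (T : {set E}).

Definition wf_graph H :=
  forall f, f \in ge H -> ((gends H f).1 \in gv H) && ((gends H f).2 \in gv H).

Definition conn_graph H := connected_on (gends H) (gv H) (ge H).

Definition spans H T :=
  [/\ T \subset ge H, connected_on (gends H) (gv H) T & forest (gends H) T].

Lemma ge_contract H e : ge (contract H e) = ge H :\ e.
Proof. by rewrite /contract; case: ifP. Qed.

End GraphConnectivity.

Section Contraction.
Variables (V E : finType) (H : mgraph V E) (e : E).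
Hypothesis nonloop : (gends H e).1 != (gends H e).2.
Implicit Types (A T : {set E}).
Let u := (gends H e).1.
Let v := (gends H e).2.

Definition cvert x := if x == v then u else x.

Lemma gv_contract : gv (contract H e) = gv H :\ v.
Proof. by rewrite /contract (negbTE nonloop). Qed.

Lemma gends_contract f :
  gends (contract H e) f = (cvert (gends H f).1, cvert (gends H f).2).
Proof. by rewrite /contract (negbTE nonloop). Qed.

Lemma cvert_head : cvert u = u.
Proof. by rewrite /cvert (negbTE nonloop). Qed.

Lemma cvert_tail : cvert v = u.
Proof. by rewrite /cvert eqxx. Qed.

Lemma cvert_id x : x != v -> cvert x = x.
Proof. by rewrite /cvert => /negbTE ->. Qed.

Lemma connect_cvert A x : e \in A -> connect (eadj (gends H) A) x (cvert x).
Proof.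
move=> eA; rewrite /cvert; case: eqP => [->|_]; last exact: connect0.
by rewrite eadj_csym; apply/connect1/eadj_ends.
Qed.

Lemma cvert_mem x : wf_graph H -> e \in ge H -> x \in gv H ->
  cvert x \in gv (contract H e).
Proof.
move=> wfH eH xH; rewrite gv_contract !inE /cvert.
by case: ifP => [_|/negbT -> //]; rewrite nonloop; case/andP: (wfH e eH).
Qed.

Lemma eadj_uncontract A x y : eadj (gends (contract H e)) A x y ->
  connect (eadj (gends H) (e |: A)) x y.
Proof.
case/existsP => f /andP[fA]; rewrite gends_contract.
have eA : e \in e |: A by rewrite setU11.
have ab := connect1 (eadj_ends (gends H) (setU1r e fA)).
have ea := connect_cvert (gends H f).1 eA; have eb := connect_cvert (gends H f).2 eA.
rewrite eadj_csym in ea; case/orP => /eqP [<- <-].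
  exact: connect_trans (connect_trans ea ab) eb.
rewrite eadj_csym in ab; rewrite eadj_csym in eb.
exact: connect_trans (connect_trans eb ab) (connect_cvert _ eA).
Qed.

Lemma connect_uncontract A x y : connect (eadj (gends (contract H e)) A) x y ->
  connect (eadj (gends H) (e |: A)) x y.
Proof. exact/connect_sub/eadj_uncontract. Qed.

Lemma eadj_contract A x y : eadj (gends H) A x y ->
  connect (eadj (gends (contract H e)) (A :\ e)) (cvert x) (cvert y).
Proof.
case/existsP => f /andP[fA j]; have [fe|nfe] := eqVneq f e.
  subst f; apply: eq_connect0; case/orP: j => /eqP ee;
  by rewrite (surjective_pairing (gends H e)) in ee; case: ee => <- <-;
     rewrite cvert_head cvert_tail.
apply/connect1/existsP; exists f; rewrite !inE nfe fA /= gends_contract.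
by case/orP: j => /eqP -> /=; rewrite eqxx ?orbT.
Qed.

Lemma connect_contract A x y : connect (eadj (gends H) A) x y ->
  connect (eadj (gends (contract H e)) (A :\ e)) (cvert x) (cvert y).
Proof. exact/connect_homo/eadj_contract. Qed.

Lemma connected_contract A : connected_on (gends H) (gv H) A ->
  connected_on (gends (contract H e)) (gv (contract H e)) (A :\ e).
Proof.
move=> cA x y; rewrite gv_contract !inE => /andP[xv xH] /andP[yv yH].
by rewrite -(cvert_id xv) -(cvert_id yv); apply/connect_contract/cA.
Qed.

Lemma wf_contract : e \in ge H -> wf_graph H -> wf_graph (contract H e).
Proof.
move=> eH wfH f; rewrite ge_contract gends_contract => /setD1P[_ fH] /=.
by case/andP: (wfH f fH) => aH bH; rewrite !cvert_mem.
Qed.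

Lemma spans_contract T : e \in T -> spans H T -> spans (contract H e) (T :\ e).
Proof.
move=> eT [sT cT fT]; split; first by rewrite ge_contract setSD.
  exact: connected_contract.
move=> f; rewrite !inE => /andP[nfe fT1]; apply/negP.
move/(connect_uncontract); rewrite gends_contract //=.
have -> : e |: (T :\ e :\ f) = T :\ f.
  by apply/setP => z; rewrite !inE; case: eqP => // ->; rewrite eq_sym nfe.
have eTf : e \in T :\ f by rewrite !inE eq_sym nfe.
move=> c; apply/negP: (fT f fT1); rewrite negbK.
have ea := connect_cvert (gends H f).1 eTf.
have eb := connect_cvert (gends H f).2 eTf.
by rewrite eadj_csym in eb; apply: connect_trans (connect_trans ea c) eb.
Qed.

Lemma forest_uncontract_other T f : f \in T -> f != e ->
  forest (gends (contract H e)) T ->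
  ~~ connect (eadj (gends H) ((e |: T) :\ f)) (gends H f).1 (gends H f).2.
Proof.
move=> fT nfe fT'; apply/negP => /(connect_contract) c.
apply/negP: (fT' f fT); rewrite negbK gends_contract //=.
apply: connect_eadj_sub c; apply/subsetP => z; rewrite !inE.
by case: eqP => // _; case: eqP.
Qed.

(* A shortest [T]-path from the head of [e] to its tail starts with an edge
   [g] at the head; the rest of the path avoids the head, so after contraction
   it joins the two ends of [g] without using [g]. *)
Lemma forest_uncontract_contracted T : e \notin T ->
  forest (gends (contract H e)) T ->
  ~~ connect (eadj (gends H) T) (gends H e).1 (gends H e).2.
Proof.
move=> eT fT; apply/negP => /connectP[p pp lp].
move: lp; case: (shortenP pp) => -[_ _ _ /= lp'|p1 q] /=.
  by move: nonloop; rewrite lp' eqxx.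
case/andP=> /existsP[g /andP[gT jg]] pq /andP[up1 _] _ lq.
have gu : ((gends H g).1 == (gends H e).1) || ((gends H g).2 == (gends H e).1).
  by case/orP: jg => /eqP ->; rewrite eqxx ?orbT.
have pq' : path (eadj (gends H) (T :\ g)) p1 q.
  apply: (sub_in_path (P := predC1 (gends H e).1)) pq.
    by move=> x y /= xu yu; apply: eadj_setD1_incident gu xu yu.
  by apply/allP => z zin /=; apply: contraNneq up1 => <-.
have /(connect_contract) c : connect (eadj (gends H) (T :\ g)) p1 (gends H e).2.
  by apply/connectP; exists q.
have sTe : T :\ g :\ e \subset T :\ g by apply: subD1set.
move: (connect_eadj_sub sTe c); rewrite cvert_tail => c'.
apply/negP: (fT g gT); rewrite negbK gends_contract //=.
by case/orP: jg => /eqP -> /=; rewrite cvert_head // eadj_csym.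
Qed.

Lemma spans_uncontract T : wf_graph H -> e \in ge H ->
  spans (contract H e) T -> spans H (e |: T).
Proof.
move=> wfH eH [sT cT fT]; rewrite ge_contract in sT.
have eT : e \notin T by apply/negP => /(subsetP sT); rewrite !inE eqxx.
have ee : e \in e |: T by rewrite setU11.
split.
- by rewrite subUset sub1set eH (subset_trans sT (subD1set _ _)).
- move=> x y xH yH.
  have c := connect_uncontract (cT _ _ (cvert_mem wfH eH xH) (cvert_mem wfH eH yH)).
  have ex := connect_cvert x ee; have ey := connect_cvert y ee.
  by rewrite eadj_csym in ey; apply: connect_trans (connect_trans ex c) ey.
move=> f; rewrite !inE; have [-> _|nfe /= fT1] := eqVneq f e.
  by rewrite setU1K //; apply: forest_uncontract_contracted.
exact: forest_uncontract_other.
Qed.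

End Contraction.

Section Deletion.
Variables (V E : finType) (H : mgraph V E) (e : E).
Implicit Types (T : {set E}).

Lemma spans_undelete T : spans (delete H e) T -> spans H T.
Proof. by case=> sT cT fT; split => //; apply: subset_trans sT (subD1set _ _). Qed.

Lemma spans_delete T : e \notin T -> spans H T -> spans (delete H e) T.
Proof.
move=> eT [sT cT fT]; split => //=; apply/subsetP => z zT; rewrite !inE.
by rewrite (subsetP sT _ zT) andbT; apply: contraNneq eT => <-.
Qed.

Lemma wf_delete : wf_graph H -> wf_graph (delete H e).
Proof. by move=> wfH f /setD1P[_ /wfH]. Qed.

End Deletion.

Section Components.
Variables (V E : finType).
Implicit Types (H : mgraph V E) (T : {set E}).

Lemma ncomp_le1P H : reflect (conn_graph H) (ncomp H <= 1).
Proof.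
apply: (iffP card_le1_eqP) => [c x y xH yH|c X Y /imsetP[x xH ->] /imsetP[y yH ->]].
  have /setP/(_ y) := c _ _ (imset_f (fun x => [set y in gv H | connect (adj H) x y]) xH)
                           (imset_f (fun x => [set y in gv H | connect (adj H) x y]) yH).
  by rewrite !inE yH connect0 /= => /esym.
apply/setP => z; rewrite !inE; case: (z \in gv H) => //=.
by apply/idP/idP; apply: connect_trans; apply: c.
Qed.

Lemma ncomp_gt0 H x : x \in gv H -> 0 < ncomp H.
Proof.
by move=> xH; apply/card_gt0P; exists [set y in gv H | connect (adj H) x y]; apply: imset_f.
Qed.

Lemma ncomp_eq0 H : gv H = set0 -> ncomp H = 0.
Proof. by move=> h; rewrite /ncomp h imset0 cards0. Qed.

Lemma conn_delete_loop H e : is_loop H e -> conn_graph H -> conn_graph (delete H e).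
Proof.
case/andP => _ /eqP uv c x y xH yH; apply: connect_sub (c x y xH yH).
move=> a b /existsP[f /andP[fH j]]; have [fe|nfe] := eqVneq f e.
  subst f; apply: eq_connect0; move: j; rewrite (surjective_pairing (gends H e)) uv.
  by case/orP => /eqP [<- <-].
by apply/connect1/existsP; exists f; rewrite /= !inE nfe fH.
Qed.

Lemma conn_delete_nonisthmus H e : e \in ge H -> ~~ is_isthmus H e ->
  conn_graph H -> conn_graph (delete H e).
Proof.
rewrite /is_isthmus => -> /= + /ncomp_le1P c; rewrite -leqNgt => le.
exact/ncomp_le1P/(leq_trans le c).
Qed.

Lemma conn_contract H e : (gends H e).1 != (gends H e).2 ->
  conn_graph H -> conn_graph (contract H e).
Proof. by move=> nl c; rewrite /conn_graph ge_contract; apply: connected_contract. Qed.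

Lemma isthmus_in_spans H T e : spans H T -> is_isthmus H e -> e \in T.
Proof.
move=> sp /andP[eH lt]; apply: contraT => eT.
have [sT cT _] := spans_delete eT sp.
have /ncomp_le1P le1 : conn_graph (delete H e).
  by move=> x y xH yH; apply: connect_eadj_sub sT _ _ (cT x y xH yH).
have [gv0|[x xH]] := set_0Vmem (gv H); first by move: lt; rewrite !ncomp_eq0.
by have := leq_trans (leq_ltn_trans (ncomp_gt0 xH) lt) le1.
Qed.

Lemma loop_notin_spans H T e : spans H T -> is_loop H e -> e \notin T.
Proof.
case=> _ _ fT /andP[_ /eqP uv]; apply: contraT; rewrite negbK => eT.
by have := fT e eT; rewrite uv connect0.
Qed.

End Components.

Section Classification.
Variables (V E : finType) (H : mgraph V E) (e : E).
Hypothesis eH : e \in ge H.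

Lemma classify_right_nonloop S :
  goes_right (classify H S e) -> (gends H e).1 != (gends H e).2.
Proof. by rewrite /classify /is_loop eH /=; case: eqP. Qed.

Lemma conn_classify_left S : ~~ goes_right (classify H S e) ->
  conn_graph H -> conn_graph (delete H e).
Proof.
rewrite /classify; case: ifP => [loop _|_]; first exact: conn_delete_loop.
by case: ifP => // nis _; apply: conn_delete_nonisthmus (negbT nis).
Qed.

Lemma classify_spanning T : spans H (T :&: ge H) ->
  goes_right (classify H T e) = (e \in T).
Proof.
move=> sp; rewrite /classify; case: ifP => [L|_].
  by have := loop_notin_spans sp L; rewrite inE eH andbT => /negbTE ->.
case: ifP => [I|_]; first by have := isthmus_in_spans sp I; rewrite inE => /andP[->].
by case: (e \in T).
Qed.

End Classification.

Lemma etype_comparable : comparable etype.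
Proof. by move=> x y; rewrite /decidable; decide equality. Qed.
HB.instance Definition _ := comparableMixin etype_comparable.

Section RunRecords.
Variable E : finType.
Implicit Types (r : seq (E * etype)) (s : seq E) (A : {set E}).

Definition typed_edges (P : pred etype) r : {set E} :=
  [set e | has (fun et => (et.1 == e) && P et.2) r].

Lemma typed_edges_nil P : typed_edges P [::] = set0.
Proof. by apply/setP => z; rewrite !inE. Qed.

Lemma typed_edges_cons P e t r : typed_edges P ((e, t) :: r) =
  if P t then e |: typed_edges P r else typed_edges P r.
Proof.
by apply/setP => z; case Pt: (P t); rewrite !inE /= Pt ?andbT ?andbF // eq_sym.
Qed.

Lemma typed_edges_sub P r : {subset typed_edges P r <= map fst r}.
Proof.
by move=> z; rewrite inE => /hasP[[z' u] zr /andP[/eqP /= <- _]]; apply: map_f zr.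
Qed.

Lemma mem_typed_edges P r e t : uniq (map fst r) -> (e, t) \in r ->
  (e \in typed_edges P r) = P t.
Proof.
elim: r => // -[e' t'] r IH /= /andP[e'r ur]; rewrite typed_edges_cons inE.
case/orP => [/eqP[-> ->]|etr].
  case: (P t'); first by rewrite setU11.
  by apply: contraNF e'r; apply: typed_edges_sub.
have ee' : e != e' by apply: contraNneq e'r => <-; apply: (map_f fst etr).
by case: (P t'); rewrite ?in_setU1 ?(negbTE ee') IH.
Qed.

Definition covers s A := uniq s /\ A =i s.

Lemma covers_nil A : covers [::] A -> A = set0.
Proof. by case=> _ h; apply/setP => z; rewrite h inE. Qed.

Lemma covers_cons e s A : covers (e :: s) A -> e \in A /\ covers s (A :\ e).
Proof.
case=> /= /andP[es us] h; rewrite h inE eqxx; split => //; split => // z.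
by rewrite !inE h inE; case: eqP => // ->; rewrite (negbTE es).
Qed.

End RunRecords.

Notation right_edges := (typed_edges goes_right).

Section Runs.
Variables (V E : finType) (lab : seq bool -> E).
Implicit Types (H : mgraph V E) (S T : {set E}).

Lemma run_spans S k H n : covers (map fst (run lab S k H n)) (ge H) ->
  wf_graph H -> conn_graph H -> spans H (right_edges (run lab S k H n)).
Proof.
elim: k H n => [|k IH] H n /=.
  move=> /covers_nil g0 _ c; rewrite typed_edges_nil /conn_graph g0 in c *.
  by split=> //; [apply: sub0set | move=> f; rewrite inE].
case/covers_cons => eH cov wfH cH; rewrite typed_edges_cons.
move: cov; case R: (goes_right (classify H S (lab n))) => cov.
  have nl := classify_right_nonloop eH R.
  apply: (spans_uncontract nl wfH eH); apply: IH.
  - by rewrite ge_contract.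
  - exact: wf_contract.
  - exact: conn_contract.
apply: spans_undelete; apply: IH => //; first exact: wf_delete.
by apply: (conn_classify_left (S := S) eH _ cH); rewrite R.
Qed.

(* The run keeps consulting the whole of [T] while edges disappear from [H]. *)
Lemma right_edges_run_spanning T k H n : covers (map fst (run lab T k H n)) (ge H) ->
  spans H (T :&: ge H) -> right_edges (run lab T k H n) = T :&: ge H.
Proof.
elim: k H n => [|k IH] H n /=.
  by move=> /covers_nil g0 _; rewrite typed_edges_nil g0 setI0.
case/covers_cons => eH cov sp; rewrite typed_edges_cons.
have R := classify_spanning eH sp; rewrite R in cov *.
move: cov; case eT: (lab n \in T) => cov.
  have nl := classify_right_nonloop eH (etrans R eT).
  rewrite IH ?ge_contract // setIDA; last by apply: spans_contract; rewrite ?inE ?eT.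
  by rewrite setD1K // inE eT.
have TeT : T :&: ge (delete H (lab n)) = T :&: ge H.
  by apply/setP => z; rewrite !inE; case: eqP => // ->; rewrite eT.
rewrite IH // TeT; apply: spans_delete sp; by rewrite inE eT.
Qed.

Lemma run_standard S k H n e t : (e, t) \in run lab S k H n ->
  ~~ is_active_type t -> goes_right t = (e \in S).
Proof.
elim: k H n => // k IH H n /=; rewrite inE => /orP[/eqP[-> ->]|]; last first.
  by case: (goes_right _) => /IH.
by rewrite /classify; case: ifP => // _; case: ifP => // _; case: (lab n \in S).
Qed.

Lemma eq_run S1 S2 k H n :
  (forall e t, (e, t) \in run lab S1 k H n -> ~~ is_active_type t ->
     (e \in S1) = (e \in S2)) ->
  run lab S1 k H n = run lab S2 k H n.
Proof.
elim: k H n => // k IH H n /= agree.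
have <- : classify H S1 (lab n) = classify H S2 (lab n).
  have := agree _ _ (mem_head _ _); rewrite /classify.
  case: ifP => // _; case: ifP => // _.
  by case: (lab n \in S1) => /(_ isT) <-.
move: agree; case: (goes_right _) => agree; congr (_ :: _);
  by apply: IH => e t et; apply: agree; rewrite inE et orbT.
Qed.

Lemma run_labels S k H n : exists2 q : seq bool, size q = k &
  map fst (run lab S k H n) = [seq lab (n ++ take i q) | i <- iota 0 k].
Proof.
elim: k H n => [|k IH] H n; first by exists [::].
set b := goes_right (classify H S (lab n)).
have [q sq eq] := IH (if b then contract H (lab n) else delete H (lab n)) (rcons n b).
exists (b :: q); first by rewrite /= sq.
rewrite /= -/b; case: b eq => -> ; rewrite cats0 -(addn0 1) iotaDl -map_comp;
  by congr (_ :: _); apply: eq_map => i /=; rewrite cat_rcons.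
Qed.

Lemma run_covers S H : 0 < #|E| -> is_decision_tree lab ->
  covers (map fst (run lab S #|E| H [::])) [set: E].
Proof.
move=> E0 dt; have [q sq ->] := run_labels S #|E| H [::].
have sq' : size (take #|E|.-1 q) = #|E|.-1 by rewrite size_take sq prednK // leqnn.
have perm := dt _ sq'.
have labels : [seq lab ([::] ++ take i q) | i <- iota 0 #|E|] =
              [seq lab (take i (take #|E|.-1 q)) | i <- iota 0 #|E|].
  apply/eq_in_map => i; rewrite mem_iota add0n => /andP[_ lt].
  by rewrite take_takel // -ltnS prednK.
rewrite labels; split; first by rewrite (perm_uniq perm) enum_uniq.
by move=> z; rewrite (perm_mem perm) mem_enum inE.
Qed.

End Runs.

Section Cycles.
Variables (V E : finType) (ends : E -> V * V).
Implicit Types (A T : {set E}).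

Definition trail_step (t : E * (V * V)) :=
  (ends t.1 == (t.2.1, t.2.2)) || (ends t.1 == (t.2.2, t.2.1)).

Lemma trail_connect A es x xs : size xs = size es -> all (mem A) es ->
  all trail_step (zip es (zip (x :: xs) xs)) -> connect (eadj ends A) x (last x xs).
Proof.
elim: es x xs => [|e es IH] x [|y xs] //= [s] /andP[eA aA] /andP[j aj].
apply: connect_trans (IH y xs s aA aj).
by apply/connect1/existsP; exists e; rewrite eA.
Qed.

Lemma trail_ends es y p : size p = size es ->
  all trail_step (zip es (zip (y :: p) p)) ->
  forall g, g \in es -> ((ends g).1 \in y :: p) && ((ends g).2 \in y :: p).
Proof.
elim: es y p => [//|g es IH] y [|z p] //= [s] /andP[j aj] g'.
rewrite inE => /orP[/eqP ->|g'es].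
  by case/orP: j => /eqP -> /=; rewrite !inE !eqxx ?orbT.
by case/andP: (IH z p s aj g' g'es) => h1 h2; rewrite inE h1 orbT inE h2 orbT.
Qed.

Lemma path_trail A x p : path (eadj ends A) x p -> uniq (x :: p) ->
  exists es, [/\ size es = size p, all (mem A) es, uniq es &
    all trail_step (zip es (zip (x :: p) p))].
Proof.
elim: p x => [|y p IH] x /=; first by exists [::].
case/andP=> /existsP[g /andP[gA jg]] pp /andP[xn u].
have [es [s aA ues aj]] := IH y pp u.
exists (g :: es); split => /=; rewrite ?s ?gA ?ues ?aj ?andbT //.
apply/negP => /(trail_ends (esym s) aj).
by case/orP: jg => /eqP -> /= /andP[h1 h2]; move: xn; rewrite ?h1 ?h2.
Qed.

Lemma cycle_not_forest T v0 es vs : is_cycle ends T v0 es vs -> ~ forest ends T.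
Proof.
case/and4P=> ne /eqP s u /and4P[aT /eqP l _ aj] fT.
case: es ne s u aT aj => [//|e1 es] _; case: vs l => [//|v1 vs] /= l [s].
case/andP=> e1n _ /andP[e1T aT] /andP[j1 aj].
have aT' : all (mem (T :\ e1)) es.
  apply/allP => z zin; rewrite !inE (allP aT _ zin) andbT.
  by apply: contraNneq e1n => <-.
have := trail_connect s aT' aj; rewrite l => c.
have := fT e1 e1T; case/orP: j1 => /= /eqP -> /=; rewrite ?c //.
by rewrite eadj_csym c.
Qed.

Lemma acyclic_forest T : acyclic ends T -> forest ends T.
Proof.
move=> ac f fT; apply/negP; case ab: (ends f) => [a b] /=.
have [eab|nab] := eqVneq a b.
  move=> _; subst b; apply/negP: (ac a [:: f] [:: a]).
  by rewrite /is_cycle /= fT /joins /= ab !eqxx.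
case/connectP => p pp lp; move: lp; case: (shortenP pp) => p' pp' up' _ lp'.
have [es [s aA ues aj]] := path_trail pp' up'.
apply/negP: (ac b (f :: es) (a :: p')).
rewrite /is_cycle /= s eqxx /= fT -lp' eqxx negbK.
have fn : f \notin es by apply/negP => /(allP aA); rewrite !inE eqxx.
move: up' => /= ->; rewrite fn ues /= /joins /= ab !eqxx orbT /=.
apply/andP; split; last exact: aj.
by apply/allP => z /(allP aA); rewrite !inE => /andP[].
Qed.

End Cycles.

Section DecisionTree.
Variables (V E : finType) (ends : E -> V * V) (lab : seq bool -> E).
Let G := MG [set: V] [set: E] ends.
Implicit Types (S T : {set E}).
Local Notation runG S := (run lab S #|E| G [::]).

Lemma spanning_treeE T : spanning_tree G T <-> spans G T.
Proof.
split=> [[sT [cT aT]]|[sT cT fT]]; split => //; first exact: acyclic_forest.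
split; first by move=> x y; apply: cT; rewrite inE.
by move=> v0 es vs; apply/negP => /cycle_not_forest.
Qed.

Hypotheses (E0 : 0 < #|E|) (dt : is_decision_tree lab).

Lemma runG_covers S : covers (map fst (runG S)) (ge G).
Proof. exact: run_covers. Qed.

Lemma runG_edge_type S e : exists t, (e, t) \in runG S.
Proof.
have [_ cov] := runG_covers S.
have : e \in map fst (runG S) by rewrite -cov inE.
by case/mapP => -[e' t] et /= ->; exists t.
Qed.

Lemma mem_active S e t : (e, t) \in runG S ->
  (e \in active G lab S) = is_active_type t.
Proof. by apply: mem_typed_edges; case: (runG_covers S). Qed.

Lemma mem_right_edges S e t : (e, t) \in runG S ->
  (e \in right_edges (runG S)) = goes_right t.
Proof. by apply: mem_typed_edges; case: (runG_covers S). Qed.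

Lemma interval_agreeP T S :
  (T :\: Jset G lab T \subset S /\ S \subset T :|: Eset G lab T) <->
  (forall (e : E) t, (e, t) \in runG T -> ~~ is_active_type t ->
     (e \in T) = (e \in S)).
Proof.
split=> [[sub1 sub2] e t et std|agree].
  have na : e \notin active G lab T by rewrite (mem_active et).
  case eT: (e \in T).
    by rewrite (subsetP sub1) // in_setD /Jset in_setI (negbTE na) eT.
  apply/esym; apply/negbTE/negP => /(subsetP sub2).
  by rewrite in_setU /Eset in_setD eT (negbTE na).
split; apply/subsetP => e; have [t et] := runG_edge_type T e.
  rewrite in_setD /Jset in_setI (mem_active et) => /andP[+ eT].
  by case/nandP => [na|]; [rewrite -(agree e t et) | rewrite eT].
rewrite in_setU /Eset in_setD (mem_active et) => eS; case eT: (e \in T) => //=.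
by apply: contraFT eT => /(agree e t et) ->.
Qed.

Lemma run_right_edges S : runG (right_edges (runG S)) = runG S.
Proof.
symmetry; apply: eq_run => e t et std.
by rewrite -(run_standard et std) (mem_right_edges et).
Qed.

Lemma spans_right_edges T : spans G T -> right_edges (runG T) = T.
Proof.
move=> spT; have := right_edges_run_spanning (runG_covers T).
by rewrite setIT; apply.
Qed.

Lemma right_edges_interval S : let T := right_edges (runG S) in
  T :\: Jset G lab T \subset S /\ S \subset T :|: Eset G lab T.
Proof.
apply/interval_agreeP; rewrite run_right_edges => e t et std.
by rewrite -(run_standard et std) (mem_right_edges et).
Qed.

Lemma interval_unique T S : spans G T ->
  T :\: Jset G lab T \subset S /\ S \subset T :|: Eset G lab T ->
  right_edges (runG S) = T.
Proof.
move=> spT /interval_agreeP agree.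
by rewrite -[RHS](spans_right_edges spT); congr right_edges; apply/esym/eq_run.
Qed.

Hypothesis cG : connected_graph G.

Lemma right_edges_spans S : spans G (right_edges (runG S)).
Proof.
apply: run_spans; first exact: runG_covers.
  by move=> f _; rewrite !inE.
by move=> x y _ _; apply: cG.
Qed.

End DecisionTree.

Theorem theorem13p3p1 (V E : finType) (ends : E -> V * V)
    (lab : seq bool -> E) :
  let G := MG [set: V] [set: E] ends in
  connected_graph G -> 0 < #|E| -> is_decision_tree lab ->
  forall S : {set E},
    exists! T : {set E},
      spanning_tree G T /\
      (T :\: Jset G lab T \subset S) /\ (S \subset T :|: Eset G lab T).
Proof.
move=> G cG E0 dt S; exists (right_edges (run lab S #|E| G [::])); split.
  split; first exact/spanning_treeE/right_edges_spans.
  exact: right_edges_interval.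
move=> T [/spanning_treeE spT interval]; exact: (interval_unique E0 dt spT interval).
Qed.
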